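(* Let $E$ be an elliptic curve, let $V$ be an algebraic subvariety of $E^n$ and let $\phi:E^n\to E^n$ be an isogeny. Then: (i) $\mathrm{Stab}\,\phi^{-1}(V)=\phi^{-1}(\mathrm{Stab}\,V)$; (ii) if $\hat\phi:E^n\to E^n$ is an isogeny and $a\in\mathrm{End}(E)$ is such that $\hat\phi\phi=\phi\hat\phi=[a]$, then $$\left|\mathrm{Stab}\,\hat\phi^{-1}(V)\cap\ker[a]\right|=|\ker\hat\phi|\cdot\left|\mathrm{Stab}\,V\cap\ker\phi\right|.$$
   Context: For a subvariety $X\subseteq E^n$, $\mathrm{Stab}\,X=\{t\in E^n : X+t\subseteq X\}$. $[a]$ denotes multiplication by $a$ on $E^n$, and $|S|$ denotes the cardinality of a finite set $S$. *)

From HB Require Import structures.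
From mathcomp Require Import all_boot all_order all_algebra.
From mathcomp Require Import all_classical.
Set Implicit Arguments. Unset Strict Implicit. Unset Printing Implicit Defensive.
Import GRing.Theory.
Local Open Scope classical_set_scope.
Local Open Scope ring_scope.

(* Abstract group-theoretic setting: E is (the group of points of) the curve,
   E^n is 'rV[E]_n with componentwise addition. *)

Definition Stab (G : zmodType) (X : set G) : set G :=
  [set t | forall x, X x -> X (x + t)].

Definition kerS (G H : zmodType) (f : G -> H) : set G := f @^-1` [set 0].

Definition isogeny (G : zmodType) (f : {additive G -> G}) : Prop :=
  (forall y, exists x, f x = y) /\ finite_set (kerS f).

Definition mulE (E : zmodType) (n : nat) (a : E -> E) : 'rV[E]_n -> 'rV[E]_n :=
  map_mx a.

From HB Require Import structures.
From mathcomp Require Import all_boot all_order all_algebra.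
From mathcomp Require Import all_classical.
From mathcomp Require Import finmap.
Import GRing.Theory.
Local Open Scope classical_set_scope.
Local Open Scope ring_scope.

(* Translation by [t] commutes with a
   surjective homomorphism [f] up to replacing [t] by [f t], which gives (i).
   Since [phi (phih x) = a x], the kernel of [[a]] is [phih^-1 (ker phi)], so by
   (i) the left-hand side of (ii) is [phih^-1 (Stab V ∩ ker phi)]; and the
   preimage of a finite set [S] under a surjective homomorphism [h] is a
   disjoint union of [|S|] cosets of [ker h]. *)

Lemma cardfsM (K K' : choiceType) (A : {fset K}) (B : {fset K'}) :
  (#|` (A `*` B)%fset| = #|` A| * #|` B|)%fset%N.
Proof.
rewrite /fsetM (perm_size (enum_imfset2 _ _)) ?size_allpairs //.
by move=> [a b] [c d] _ _ /= [-> ->].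
Qed.

Lemma Stab_preimage (G H : zmodType) (f : {additive G -> H}) (V : set H) :
  (forall y, exists x, f x = y) ->
  Stab (f @^-1` V) = f @^-1` Stab V.
Proof.
move=> f_surj; apply/seteqP; split => t /=.
  move=> Ht y; have [x <-] := f_surj y.
  by rewrite -raddfD; exact: Ht.
by move=> Ht x /= Vx; rewrite raddfD; exact: Ht.
Qed.

Section PreimageCard.
Variables (G H : zmodType) (h : {additive G -> H}) (s : H -> G).
Hypothesis hs : cancel s h.

Let lift (p : G * H) : G := p.1 + s p.2.

Lemma preimage_eq_image_kernel (S : set H) :
  h @^-1` S = lift @` (kerS h `*` S).
Proof.
apply/seteqP; split => x /=.
  move=> Sx; exists (x - s (h x), h x); last by rewrite /lift /= subrK.
  by split => //=; rewrite /kerS /= raddfB hs subrr.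
by move=> [[k y] [/= hk Sy] <-]; rewrite /lift /= raddfD hs hk add0r.
Qed.

Lemma lift_inj_kernel (p q : G * H) :
  kerS h p.1 -> kerS h q.1 -> lift p = lift q -> p = q.
Proof.
case: p q => [k y] [k' y'] /= hk hk' e.
have ey : y = y' by have := congr1 h e; rewrite !raddfD !hs hk hk' !add0r.
by move: e; rewrite /lift /= ey => /addIr ->.
Qed.

Lemma card_preimage (S : set H) :
  finite_set (kerS h) -> finite_set S ->
  finite_set (h @^-1` S) /\
  #|` fset_set (h @^-1` S)|%fset = (#|` fset_set (kerS h)| * #|` fset_set S|)%fset%N.
Proof.
move=> finK finS; have finKS := finite_setX finK finS.
rewrite preimage_eq_image_kernel; split; first exact: finite_image.
rewrite fset_set_image // fset_setX // -cardfsM card_in_imfset //.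
move=> p q; rewrite !in_fsetM !in_fset_set //.
by move=> /andP[/set_mem hp _] /andP[/set_mem hq _]; exact: lift_inj_kernel.
Qed.

End PreimageCard.

Theorem lemma3p2 (E : zmodType) (n : nat) (V : set 'rV[E]_n)
    (phi : {additive 'rV[E]_n -> 'rV[E]_n}) :
  isogeny phi ->
  Stab (phi @^-1` V) = phi @^-1` (Stab V) /\
  (forall (phih : {additive 'rV[E]_n -> 'rV[E]_n}) (a : {additive E -> E}),
     isogeny phih ->
     (forall x, phih (phi x) = mulE a x) ->
     (forall x, phi (phih x) = mulE a x) ->
     finite_set (Stab (phih @^-1` V) `&` kerS (mulE a)) /\
     (#|` fset_set (Stab (phih @^-1` V) `&` kerS (mulE a))|)%fset =
       (#|` fset_set (kerS phih)|%fset * #|` fset_set (Stab V `&` kerS phi)|%fset)%N).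
Proof.
move=> [phi_surj finK]; split; first exact: Stab_preimage.
move=> phih a [phih_surj finKh] _ phi_phih.
have ker_a : kerS (mulE a) = phih @^-1` kerS phi.
  by apply/seteqP; split => x; rewrite /kerS /= phi_phih.
have [s hs] : {s : 'rV[E]_n -> 'rV[E]_n | cancel s phih}.
  by exists (fun y => proj1_sig (cid (phih_surj y))) => y; case: cid.
rewrite Stab_preimage // ker_a -preimage_setI.
exact: card_preimage hs _ finKh (finite_setIr _ finK).
Qed.
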